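(* Let $\Bbbk$ be a field and $f(t)=1+\sum_{k\ge 1}a_kt^k\in\Bbbk[[t]]$. For $k\ge 0$ let $P_{f,k}(t)\in\Bbbk[t]$ be the polynomial $$P_{f,k}(t)=(-1)^k\det\begin{pmatrix} 1&a_1t&a_2t^2&\ldots &a_kt^k\\ 1&a_1&a_2&\ldots &a_k\\ 0&1&a_1&\ldots &a_{k-1}\\ \vdots&\vdots&\ddots&\ddots&\vdots\\ 0&0&\ldots &1&a_1 \end{pmatrix}$$ (a $(k+1)\times(k+1)$ determinant whose first row is $(1,a_1t,\dots,a_kt^k)$, second row $(1,a_1,\dots,a_k)$, and whose row $r\ge 3$ has $0$ in its first $r-2$ entries, $1$ in entry $r-1$, and then $a_1,a_2,\dots$), with the convention $P_{f,0}(t)=1$. Then, as formal power series in $x$ with coefficients in $\Bbbk[t]$, $$\frac{f(tx)}{f(x)}=\sum_{k\ge 0}P_{f,k}(t)\,x^k,$$ and for all $k\ge 0$, $$P_{f,k}(st)=\sum_{i=0}^k P_{f,i}(s)\,P_{f,k-i}(t)\,t^i$$ as polynomials in the independent variables $s,t$. *)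

From HB Require Import structures.
From mathcomp Require Import all_boot all_order all_algebra.
Set Implicit Arguments. Unset Strict Implicit. Unset Printing Implicit Defensive.
Import Order.TTheory GRing.Theory Num.Theory.
Local Open Scope ring_scope.

Definition fps (R : Type) := nat -> R.

Definition fps_mul (R : pzRingType) (g h : fps R) : fps R :=
  fun n => \sum_(i < n.+1) g i * h (n - i)%N.

(* Coefficients 0..n of the multiplicative inverse of g (valid when g 0 is
   a unit): b_0 = (g 0)^-1, b_m = - (g 0)^-1 * \sum_{i=1}^m g_i b_{m-i}. *)
Fixpoint fps_inv_seq (R : unitRingType) (g : fps R) (n : nat) : seq R :=
  match n with
  | 0 => [:: (g 0%N)^-1]
  | m.+1 => let s := fps_inv_seq g m in
      rcons s (- ((g 0%N)^-1 * \sum_(i < m.+1) g i.+1 * nth 0 s (m - i)%N))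
  end.

Definition fps_inv (R : unitRingType) (g : fps R) : fps R :=
  fun n => nth 0 (fps_inv_seq g n) n.

Definition fps_div (R : unitRingType) (g h : fps R) : fps R :=
  fps_mul g (fps_inv h).

(* f(t) = 1 + \sum_{k>=1} a_k t^k : the coefficient sequence of f
   (the value a 0 is ignored; the constant term is 1). *)
Definition fcoef (K : fieldType) (a : nat -> K) (n : nat) : K :=
  if n == 0%N then 1 else a n.

(* The (k+1)x(k+1) matrix of the paper, entries in k[t] ('X = t). *)
Definition Pmat (K : fieldType) (a : nat -> K) (k : nat) : 'M[{poly K}]_k.+1 :=
  \matrix_(r < k.+1, j < k.+1)
    if r == 0 :> nat then fcoef a j *: 'X^j
    else if (r.-1 <= j)%N then (fcoef a (j - r.-1)%N)%:P else 0.

(* P_{f,k}(t) = (-1)^k det(...); for k = 0 this is det [1] = 1. *)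
Definition Pfk (K : fieldType) (a : nat -> K) (k : nat) : {poly K} :=
  (-1) ^+ k * \det (Pmat a k).

(* f(tx) and f(x) as power series in x with coefficients in k[t]. *)
Definition f_tx (K : fieldType) (a : nat -> K) : fps {poly K} :=
  fun n => fcoef a n *: 'X^n.
Definition f_x (K : fieldType) (a : nat -> K) : fps {poly K} :=
  fun n => (fcoef a n)%:P.

From HB Require Import structures.
From mathcomp Require Import all_boot all_order all_algebra zify ring.
Import Order.TTheory GRing.Theory Num.Theory.
Local Open Scope ring_scope.

(* Right multiplication by the unitriangular Toeplitz matrix of 1/f(x) turns
   rows 2..k+1 of the matrix of P_{f,k} into shifted unit vectors and puts the
   x^k-coefficient of f(tx)/f(x) in the top right corner; expanding along the
   last column shows that this coefficient is P_{f,k}(t).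
   For the second identity, f(stx)/f(x) = (f(stx)/f(tx)) (f(tx)/f(x)) =
   (sum_i P_{f,i}(s) (tx)^i) (sum_j P_{f,j}(t) x^j): both sides, multiplied by
   f(x), give f(stx), and a series with constant term 1 is cancellable. *)

Lemma eq_fps_mul {R : pzRingType} {g g' h h' : fps R} n :
  g =1 g' -> h =1 h' -> fps_mul g h n = fps_mul g' h' n.
Proof. by move=> eq_g eq_h; apply: eq_bigr => i _; rewrite eq_g eq_h. Qed.

Definition fps_trunc {R : nzRingType} (g : fps R) n : {poly R} :=
  \poly_(i < n.+1) g i.

Lemma coef_fps_trunc {R : nzRingType} (g : fps R) n i :
  (i <= n)%N -> (fps_trunc g n)`_i = g i.
Proof. by move=> le_in; rewrite coef_poly ltnS le_in. Qed.

Lemma coefM_fps {R : nzRingType} (p q : {poly R}) (g h : fps R) n :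
  {in [pred i | i <= n]%N, forall i, p`_i = g i} ->
  {in [pred i | i <= n]%N, forall i, q`_i = h i} ->
  (p * q)`_n = fps_mul g h n.
Proof.
move=> eq_p eq_q; rewrite coefM; apply: eq_bigr => i _.
by rewrite eq_p ?eq_q ?inE ?leq_subr // -ltnS.
Qed.

Lemma coefM_fps_trunc {R : nzRingType} (g h : fps R) n m :
  (m <= n)%N -> (fps_trunc g n * fps_trunc h n)`_m = fps_mul g h m.
Proof.
move=> le_mn; apply: coefM_fps => i; rewrite inE => le_im;
  exact: coef_fps_trunc (leq_trans le_im le_mn).
Qed.

Lemma fps_mulA {R : nzRingType} (g h l : fps R) n :
  fps_mul (fps_mul g h) l n = fps_mul g (fps_mul h l) n.
Proof.
(* Coefficients up to n only see the truncations at n, where {poly R} is associative. *)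
pose p (f : fps R) := fps_trunc f n.
have -> : fps_mul (fps_mul g h) l n = (p g * p h * p l)`_n.
  symmetry; apply: coefM_fps => i; rewrite inE => le_in.
    exact: coefM_fps_trunc.
  exact: coef_fps_trunc.
have -> : fps_mul g (fps_mul h l) n = (p g * (p h * p l))`_n.
  symmetry; apply: coefM_fps => i; rewrite inE => le_in.
    exact: coef_fps_trunc.
  exact: coefM_fps_trunc.
by rewrite mulrA.
Qed.

Lemma fps_mulC {R : comNzRingType} (g h : fps R) n :
  fps_mul g h n = fps_mul h g n.
Proof.
rewrite -(coefM_fps_trunc g h _ _ (leqnn n)) -(coefM_fps_trunc h g _ _ (leqnn n)).
by rewrite mulrC.
Qed.

Definition fps1 (R : pzRingType) : fps R := fun n => (n == 0%N)%:R.

Lemma fps_mulr1 {R : pzRingType} (g : fps R) n : fps_mul g (fps1 R) n = g n.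
Proof.
rewrite /fps_mul big_ord_recr /= subnn mulr1 big1 ?add0r // => i _.
by rewrite /fps1 subn_eq0 leqNgt ltn_ord mulr0.
Qed.

Lemma fps_mul_injr {R : pzRingType} (c g h : fps R) : c 0%N = 1 ->
  (forall n, fps_mul g c n = fps_mul h c n) -> g =1 h.
Proof.
move=> c0 eq_gh; elim/ltn_ind => n IH; move: (eq_gh n).
rewrite /fps_mul !big_ord_recr /= subnn c0 !mulr1.
rewrite (eq_bigr (fun i : 'I_n => h i * c (n - i)%N)) => [/addrI //|i _].
by rewrite IH.
Qed.

Section FpsInverse.

Variables (R : unitRingType) (g : fps R).

Lemma size_fps_inv_seq n : size (fps_inv_seq g n) = n.+1.
Proof. by elim: n => //= n IH; rewrite size_rcons IH. Qed.

Lemma nth_fps_inv_seq n i : (i <= n)%N -> nth 0 (fps_inv_seq g n) i = fps_inv g i.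
Proof.
elim: n => [|n IH]; first by rewrite leqn0 => /eqP->.
rewrite leq_eqVlt => /orP[/eqP-> //|lt_in].
by rewrite /= nth_rcons size_fps_inv_seq lt_in IH.
Qed.

Lemma fps_invS n :
  fps_inv g n.+1 = - ((g 0%N)^-1 * \sum_(i < n.+1) g i.+1 * fps_inv g (n - i)%N).
Proof.
rewrite {1}/fps_inv /= nth_rcons size_fps_inv_seq ltnn eqxx.
congr (- (_ * _)); apply: eq_bigr => i _.
by rewrite nth_fps_inv_seq // leq_subr.
Qed.

Hypothesis g0 : g 0%N = 1.

Lemma fps_inv0 : fps_inv g 0%N = 1.
Proof. by rewrite /fps_inv /= g0 invr1. Qed.

Lemma fps_mulrV n : fps_mul g (fps_inv g) n = fps1 R n.
Proof.
case: n => [|n]; first by rewrite /fps_mul big_ord1 g0 fps_inv0 mulr1.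
rewrite /fps_mul big_ord_recl fps_invS g0 invr1 !mul1r.
by rewrite (eq_bigr (fun i : 'I_n.+1 => g i.+1 * fps_inv g (n - i)%N)) ?addNr.
Qed.

End FpsInverse.

Lemma sum_toeplitz_mul {R : pzRingType} (g h : fps R) (n i j : nat) : (j < n)%N ->
  \sum_(k < n) ((if (i <= k)%N then g (k - i)%N else 0) *
                (if (k <= j)%N then h (j - k)%N else 0)) =
  if (i <= j)%N then fps_mul g h (j - i)%N else 0.
Proof.
move=> lt_jn; have [le_ij|lt_ji] := leqP i j; last first.
  rewrite big1 // => k _; case: leqP => [le_ik|_]; rewrite ?mul0r //.
  by rewrite leqNgt (leq_trans lt_ji le_ik) mulr0.
rewrite -(big_mkord xpredT (fun k => (if (i <= k)%N then g (k - i)%N else 0) *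
                                  (if (k <= j)%N then h (j - k)%N else 0))).
rewrite (big_cat_nat (leq0n i) (leq_trans le_ij (ltnW lt_jn))) /=.
rewrite big_nat_cond big1 ?add0r; last first.
  move=> k /andP[/andP[_ lt_ki] _].
  by rewrite leqNgt lt_ki mul0r.
rewrite (big_cat_nat (leqW le_ij) lt_jn) /=.
rewrite [X in _ + X]big_nat_cond [X in _ + X]big1 ?addr0; last first.
  move=> k /andP[/andP[lt_jk _] _].
  by rewrite (leqNgt k j) lt_jk mulr0.
rewrite -{1}(add0n i) big_addn subSn // big_mkord; apply: eq_big => // k _.
have le_kij : (k + i <= j)%N by have := ltn_ord k; lia.
by rewrite leq_addl addnK le_kij addnC subnDA.
Qed.

Lemma fcoef0 (K : fieldType) (a : nat -> K) : fcoef a 0%N = 1.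
Proof. by rewrite /fcoef eqxx. Qed.

Lemma f_x0 (K : fieldType) (a : nat -> K) : f_x a 0%N = 1.
Proof. by rewrite /f_x fcoef0. Qed.

Section PfkSeries.

Variables (K : fieldType) (a : nat -> K) (n : nat).

Let N : 'M[{poly K}]_n.+1 :=
  \matrix_(i, j) if (i <= j)%N then fps_inv (f_x a) (j - i)%N else 0.

Lemma det_fx_inv_mx : \det N = 1.
Proof.
rewrite -det_tr det_trig; last first.
  by apply/is_trig_mxP => i j lt_ij; rewrite !mxE leqNgt lt_ij.
by rewrite big1 // => i _; rewrite !mxE leqnn subnn fps_inv0 ?f_x0.
Qed.

Lemma Pmat_mulmx_row (r j : 'I_n.+1) : r != ord0 ->
  (Pmat a n *m N) r j = (j == r.-1 :> nat)%:R.
Proof.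
move=> r_neq0; rewrite mxE.
have r_val_neq0 : (r != 0 :> nat) by rewrite -(inj_eq val_inj) in r_neq0.
rewrite (eq_bigr (fun k : 'I_n.+1 =>
  (if (r.-1 <= k)%N then f_x a (k - r.-1)%N else 0) *
  (if (k <= j)%N then fps_inv (f_x a) (j - k)%N else 0))); last first.
  by move=> k _; rewrite !mxE (negbTE r_val_neq0).
rewrite sum_toeplitz_mul // fps_mulrV ?f_x0 // /fps1 subn_eq0.
by rewrite eqn_leq andbC; case: leqP.
Qed.

Lemma Pmat_mulmx_top : (Pmat a n *m N) ord0 ord_max = fps_div (f_tx a) (f_x a) n.
Proof. by rewrite mxE; apply: eq_bigr => k _; rewrite !mxE /= -ltnS ltn_ord. Qed.

Lemma det_Pmat_mulmx :
  \det (Pmat a n *m N) = (-1) ^+ n * fps_div (f_tx a) (f_x a) n.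
Proof.
rewrite (expand_det_col _ ord_max) big_ord_recl big1 ?addr0; last first.
  by move=> i _; rewrite Pmat_mulmx_row //= add0n gtn_eqF ?mul0r.
rewrite Pmat_mulmx_top /cofactor add0n mulrC.
suff -> : row' ord0 (col' ord_max (Pmat a n *m N)) = 1%:M by rewrite det1 mulr1.
apply/matrixP => i j; rewrite [LHS]mxE [LHS]mxE Pmat_mulmx_row // !mxE /=.
by rewrite /bump leqNgt ltn_ord add0n eq_sym.
Qed.

Lemma fps_div_ftx_fx : fps_div (f_tx a) (f_x a) n = Pfk a n.
Proof.
have := det_Pmat_mulmx; rewrite det_mulmx det_fx_inv_mx mulr1 /Pfk => ->.
by rewrite mulrA -exprMn mulrNN mulr1 expr1n mul1r.
Qed.

End PfkSeries.

Lemma Pfk_mul_fx (K : fieldType) (a : nat -> K) n :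
  fps_mul (Pfk a) (f_x a) n = f_tx a n.
Proof.
have fx_inv_mul m : fps_mul (fps_inv (f_x a)) (f_x a) m = fps1 _ m.
  by rewrite fps_mulC fps_mulrV ?f_x0.
rewrite -(eq_fps_mul n (fps_div_ftx_fx _ a) (frefl _)) fps_mulA.
by rewrite (eq_fps_mul n (frefl _) fx_inv_mul) fps_mulr1.
Qed.

Section DilationIdentity.

Variables (R : comNzRingType) (g : fps R) (P : fps {poly R}).
Hypothesis g0 : g 0%N = 1.
Hypothesis P_mul : forall n, fps_mul P (fun i => (g i)%:P) n = g n *: 'X^n.

Let st : {poly {poly R}} := 'X * ('X)%:P.
Let gC : fps {poly {poly R}} := fun n => (g n)%:P%:P.

Lemma comp_mul_dilation n :
  fps_mul (fun i => (P i)^:P \Po st) gC n = gC n * st ^+ n.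
Proof.
transitivity ((fps_mul P (fun i => (g i)%:P) n)^:P \Po st).
  rewrite /fps_mul !rmorph_sum; apply: eq_bigr => i _.
  by rewrite !rmorphM /= map_polyC comp_polyC.
by rewrite P_mul -mul_polyC !rmorphM /= map_polyC map_polyXn comp_polyC comp_Xn_poly.
Qed.

Lemma convolution_mul_dilation n :
  fps_mul (fun k => \sum_(i < k.+1) (P i)^:P * (P (k - i)%N * 'X^i)%:P) gC n =
  gC n * st ^+ n.
Proof.
pose U i := (P i)^:P * ('X^i)%:P; pose V j := (P j)%:P : {poly {poly R}}.
have UV k : \sum_(i < k.+1) (P i)^:P * (P (k - i)%N * 'X^i)%:P = fps_mul U V k.
  by apply: eq_bigr => i _; rewrite /U /V polyCM mulrA mulrAC.
have VgC m : fps_mul V gC m = (g m *: 'X^m)%:P.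
  by rewrite -P_mul /fps_mul rmorph_sum; apply: eq_bigr => i _; rewrite rmorphM.
rewrite (eq_fps_mul n UV (frefl _)) fps_mulA (eq_fps_mul n (frefl _) VgC).
transitivity ((fps_mul P (fun i => (g i)%:P) n)^:P * ('X^n)%:P).
  rewrite /fps_mul rmorph_sum big_distrl; apply: eq_bigr => i _ /=.
  have -> : ('X^n : {poly R})%:P = ('X^i)%:P * ('X^(n - i))%:P :> {poly {poly R}}.
    by rewrite -polyCM -exprD subnKC // -ltnS.
  by rewrite /U -mul_polyC polyCM rmorphM /= map_polyC; ring.
by rewrite P_mul -mul_polyC rmorphM /= map_polyC map_polyXn exprMn rmorphXn mulrA.
Qed.

Lemma dilation_identity k :
  (P k)^:P \Po st = \sum_(i < k.+1) (P i)^:P * (P (k - i)%N * 'X^i)%:P.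
Proof.
apply: (fps_mul_injr gC (fun k => (P k)^:P \Po st)
  (fun k => \sum_(i < k.+1) (P i)^:P * (P (k - i)%N * 'X^i)%:P)) => [|n].
  by rewrite /gC g0.
by rewrite comp_mul_dilation convolution_mul_dilation.
Qed.

End DilationIdentity.

Theorem theorem1p1 (K : fieldType) (a : nat -> K) :
  (forall n : nat, fps_div (f_tx a) (f_x a) n = Pfk a n) /\
  (forall k : nat,
     (Pfk a k)^:P \Po ('X * ('X)%:P) =
     \sum_(i < k.+1) (Pfk a i)^:P * (Pfk a (k - i)%N * 'X^i)%:P).
Proof.
split; first exact: fps_div_ftx_fx.
move=> k; apply: (@dilation_identity _ (fcoef a)); [exact: fcoef0 | exact: Pfk_mul_fx].
Qed.
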